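(* Let $Q=\operatorname{diag}(\lambda_1,\lambda_2,\lambda_3)$ with $-\tfrac13<\lambda_1\le\lambda_2\le\lambda_3<\tfrac23$ and $\lambda_1+\lambda_2+\lambda_3=0$, and let $\mu_1,\mu_2,\mu_3$ be the Lagrange multipliers of its optimal density $\rho_Q$. Then $\mu_1\le\mu_2\le\mu_3$, and $\mu_i=\mu_j$ whenever $\lambda_i=\lambda_j$ ($1\le i\ne j\le 3$).
   Context: Points of the unit sphere $\mathbb S^2$ are written $(x,y,z)$, and $\mathrm dS$ is surface measure. For a physical $Q$ (symmetric traceless with all eigenvalues in $(-\tfrac13,\tfrac23)$) the Ball–Majumdar potential is $f(Q)=\inf\int_{\mathbb S^2}\rho\ln\rho\,\mathrm dS$ over even probability densities $\rho$ with $\int(\mathbf n\otimes\mathbf n-\tfrac13I_3)\rho\,\mathrm dS=Q$. For diagonal physical $Q=\operatorname{diag}(\lambda_1,\lambda_2,\lambda_3)$ this infimum is attained by the density $\rho_Q(x,y,z)=\exp(\mu_1x^2+\mu_2y^2+\mu_3z^2)/Z$, $Z=\int_{\mathbb S^2}\exp(\mu_1x^2+\mu_2y^2+\mu_3z^2)\,\mathrm dS$, where the real numbers $\mu_1,\mu_2,\mu_3$ (the Lagrange multipliers) satisfy $\mu_1+\mu_2+\mu_3=0$ and $\frac1Z\frac{\partial Z}{\partial\mu_i}=\lambda_i+\tfrac13$, i.e. $\int x^2\rho_Q\,\mathrm dS=\lambda_1+\tfrac13$, $\int y^2\rho_Q\,\mathrm dS=\lambda_2+\tfrac13$, $\int z^2\rho_Q\,\mathrm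 dS=\lambda_3+\tfrac13$. *)

From Stdlib Require Import Reals.
From Coquelicot Require Import Coquelicot.
Open Scope R_scope.

(* Surface integral over the unit sphere S^2 (surface measure dS), written in
   spherical coordinates: (x,y,z) = (sin t cos p, sin t sin p, cos t),
   dS = sin t dt dp, t in [0,pi], p in [0,2 pi]. *)
Definition sphere_int (f : R -> R -> R -> R) : R :=
  RInt (fun p =>
    RInt (fun t => f (sin t * cos p) (sin t * sin p) (cos t) * sin t) 0 PI)
    0 (2 * PI).

Definition BM_Z (m1 m2 m3 : R) : R :=
  sphere_int (fun x y z => exp (m1 * x ^ 2 + m2 * y ^ 2 + m3 * z ^ 2)).

Definition BM_rho (m1 m2 m3 : R) (x y z : R) : R :=
  exp (m1 * x ^ 2 + m2 * y ^ 2 + m3 * z ^ 2) / BM_Z m1 m2 m3.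

(* (m1,m2,m3) are the Lagrange multipliers of the optimal density for
   Q = diag(l1,l2,l3): they sum to zero and the second moments of rho_Q
   reproduce Q + I/3. *)
Definition BM_multipliers (l1 l2 l3 m1 m2 m3 : R) : Prop :=
  m1 + m2 + m3 = 0 /\
  sphere_int (fun x y z => x ^ 2 * BM_rho m1 m2 m3 x y z) = l1 + 1/3 /\
  sphere_int (fun x y z => y ^ 2 * BM_rho m1 m2 m3 x y z) = l2 + 1/3 /\
  sphere_int (fun x y z => z ^ 2 * BM_rho m1 m2 m3 x y z) = l3 + 1/3.

From Stdlib Require Import Reals Lra.
From Coquelicot Require Import Coquelicot.
Open Scope R_scope.

(* Rotations preserve surface measure, so the integral over the sphere of the
   derivative of any function along a rotation field vanishes.  The generator
   x_j d/dx_i - x_i d/dx_j maps x_i x_j rho_Q to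
     (x_j^2 - x_i^2) rho_Q + 2 (mu_i - mu_j) x_i^2 x_j^2 rho_Q,
   hence lambda_i - lambda_j = 2 (mu_i - mu_j) * int x_i^2 x_j^2 rho_Q dS with a
   positive integral: mu_i - mu_j has the sign of lambda_i - lambda_j and
   vanishes with it.  In spherical coordinates (t, p) such a derivative is
   d_t A + d_p B with A vanishing at the poles and B 2 pi-periodic, so its
   integral vanishes by the fundamental theorem of calculus in each variable. *)

Lemma continuity_2d_pt_fst (F : R -> R -> R) (t p : R) :
  continuity_2d_pt F t p -> continuous (fun u => F u p) t.
Proof.
  intros HF. apply filterlim_locally. intros eps.
  destruct (HF eps) as [d Hd]. exists d. intros u Hu. apply Hd; [exact Hu|].
  rewrite Rminus_diag, Rabs_R0. apply cond_pos.
Qed.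

Lemma continuity_2d_pt_comp (g : R -> R) (F : R -> R -> R) (t p : R) :
  continuous g (F t p) -> continuity_2d_pt F t p ->
  continuity_2d_pt (fun u v => g (F u v)) t p.
Proof.
  intros Hg HF. apply continuity_2d_pt_filterlim.
  apply continuity_2d_pt_filterlim in HF. eapply filterlim_comp; [exact HF | exact Hg].
Qed.

Lemma continuity_2d_pt_pow (F : R -> R -> R) (n : nat) (t p : R) :
  continuity_2d_pt F t p -> continuity_2d_pt (fun u v => F u v ^ n) t p.
Proof.
  intros HF. induction n as [|n IH]; simpl.
  - apply continuity_2d_pt_const.
  - apply continuity_2d_pt_mult; assumption.
Qed.

Lemma continuity_2d_pt_div_const (F : R -> R -> R) (c t p : R) :
  continuity_2d_pt F t p -> continuity_2d_pt (fun u v => F u v / c) t p.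
Proof.
  intros HF. apply continuity_2d_pt_mult; [exact HF | apply continuity_2d_pt_const].
Qed.

Ltac continuity_2d := repeat first
  [ apply continuity_2d_pt_plus | apply continuity_2d_pt_minus
  | apply continuity_2d_pt_mult | apply continuity_2d_pt_opp
  | apply continuity_2d_pt_div_const | apply continuity_2d_pt_pow
  | apply continuity_2d_pt_id1 | apply continuity_2d_pt_id2
  | apply continuity_2d_pt_const
  | apply (continuity_2d_pt_comp sin); [apply continuous_sin|]
  | apply (continuity_2d_pt_comp cos); [apply continuous_cos|]
  | apply (continuity_2d_pt_comp exp); [apply continuous_exp|] ].

Definition continuous_2d (F : R -> R -> R) : Prop :=
  forall t p, continuity_2d_pt F t p.

Lemma ex_RInt_continuous_2d (F : R -> R -> R) (a b p : R) :
  continuous_2d F -> ex_RInt (fun t => F t p) a b.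
Proof.
  intros HF. apply (ex_RInt_continuous (V := R_CompleteNormedModule)).
  intros t _. apply continuity_2d_pt_fst, HF.
Qed.

Lemma continuous_RInt_param (F : R -> R -> R) (a b p : R) :
  a <= b -> continuous_2d F -> continuous (fun q => RInt (fun t => F t q) a b) p.
Proof.
  intros Hab HF. apply filterlim_locally. intros eps.
  assert (Hk : 0 < eps / (b - a + 1)) by (apply Rdiv_lt_0_compat; [apply cond_pos | lra]).
  destruct (uniform_continuity_2d_1d F a b p (fun t _ => HF t p) (mkposreal _ Hk)) as [d Hd].
  exists d. intros q Hq. change (Rabs (RInt (fun t => F t q) a b - RInt (fun t => F t p) a b) < eps).
  rewrite <- (RInt_minus (V := R_CompleteNormedModule)) by apply ex_RInt_continuous_2d, HF.
  apply Rle_lt_trans with ((b - a) * (eps / (b - a + 1))).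
  - apply abs_RInt_le_const; [exact Hab | apply (ex_RInt_minus (V := R_CompleteNormedModule));
      apply ex_RInt_continuous_2d, HF |].
    intros t Ht. left. apply (Hd t p t q Ht); try assumption.
    + pose proof (cond_pos d). lra.
    + split; apply Rabs_le_between'; left; exact Hq.
    + rewrite Rminus_diag, Rabs_R0. apply cond_pos.
  - assert (He := cond_pos eps).
    apply Rlt_le_trans with ((b - a + 1) * (eps / (b - a + 1))); [apply Rmult_lt_compat_r; lra|].
    right. field. lra.
Qed.

Lemma RInt_gt_0_on_subinterval (f : R -> R) (a b c : R) :
  a < b <= c -> (forall x, a <= x <= c -> continuous f x) ->
  (forall x, a <= x <= c -> 0 <= f x) -> (forall x, a < x < b -> 0 < f x) ->
  0 < RInt f a c.
Proof.
  intros Habc Hf Hnonneg Hpos.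
  assert (Hex : forall u v, a <= u -> u <= v -> v <= c -> ex_RInt f u v).
  { intros u v Hu Huv Hv. apply (ex_RInt_continuous (V := R_CompleteNormedModule)).
    intros x Hx. rewrite Rmin_left, Rmax_right in Hx by lra. apply Hf. lra. }
  rewrite <- (RInt_Chasles (V := R_CompleteNormedModule) f a b c) by (apply Hex; lra).
  apply Rplus_lt_le_0_compat.
  - apply RInt_gt_0; [lra | exact Hpos | intros x Hx; apply Hf; lra].
  - apply RInt_ge_0; [lra | apply Hex; lra | intros x Hx; apply Hnonneg; lra].
Qed.

Section DoubleIntegral.

Variables a b c d : R.
Hypothesis Hab : a <= b.

Definition double_int (F : R -> R -> R) : R :=
  RInt (fun p => RInt (fun t => F t p) a b) c d.

Lemma double_int_ext (F G : R -> R -> R) :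
  (forall t p, F t p = G t p) -> double_int F = double_int G.
Proof.
  intros HFG. apply RInt_ext. intros p _. apply RInt_ext. intros t _. apply HFG.
Qed.

Lemma ex_RInt_RInt_param (F : R -> R -> R) :
  continuous_2d F -> ex_RInt (fun p => RInt (fun t => F t p) a b) c d.
Proof.
  intros HF. apply (ex_RInt_continuous (V := R_CompleteNormedModule)).
  intros p _. apply continuous_RInt_param; assumption.
Qed.

Lemma double_int_plus (F G : R -> R -> R) : continuous_2d F -> continuous_2d G ->
  double_int (fun t p => F t p + G t p) = double_int F + double_int G.
Proof.
  intros HF HG. unfold double_int.
  rewrite <- (RInt_plus (V := R_CompleteNormedModule)) by (apply ex_RInt_RInt_param; assumption).
  apply RInt_ext. intros p _.
  apply (RInt_plus (V := R_CompleteNormedModule)); apply ex_RInt_continuous_2d; assumption.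
Qed.

Lemma double_int_scal (k : R) (F : R -> R -> R) : continuous_2d F ->
  double_int (fun t p => k * F t p) = k * double_int F.
Proof.
  intros HF. unfold double_int.
  rewrite <- (RInt_scal (V := R_CompleteNormedModule)) by apply ex_RInt_RInt_param, HF.
  apply RInt_ext. intros p _.
  apply (RInt_scal (V := R_CompleteNormedModule)), ex_RInt_continuous_2d, HF.
Qed.

Lemma double_int_derive_fst (A At : R -> R -> R) : continuous_2d At ->
  (forall t p, is_derive (fun u => A u p) t (At t p)) ->
  double_int At = RInt (fun p => A b p - A a p) c d.
Proof.
  intros HAt DA. apply RInt_ext. intros p _.
  apply is_RInt_unique, (is_RInt_derive (fun u => A u p)).
  - intros t _. apply DA.
  - intros t _. apply continuity_2d_pt_fst, HAt.
Qed.

Lemma double_int_derive_snd (B Bp : R -> R -> R) : continuous_2d B -> continuous_2d Bp ->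
  (forall t p, is_derive (fun v => B t v) p (Bp t p)) ->
  double_int Bp = RInt (fun t => B t d) a b - RInt (fun t => B t c) a b.
Proof.
  intros HB HBp DB.
  assert (DK : forall p, is_derive (fun v => RInt (fun t => B t v) a b) p
                                    (RInt (fun t => Bp t p) a b)).
  { intros p.
    rewrite (RInt_ext _ (fun t => Derive (fun v => B t v) p))
      by (intros t _; symmetry; apply is_derive_unique, DB).
    apply (is_derive_RInt_param (fun v t => B t v)).
    - apply filter_forall. intros q t _. eexists. apply DB.
    - intros t _. apply continuity_2d_pt_ext with (fun u v => Bp v u).
      + intros u v. symmetry. apply is_derive_unique, DB.
      + intros eps. destruct (HBp t p eps) as [e He]. exists e. intros u v Hu Hv. apply He; assumption.
    - apply filter_forall. intros q. apply ex_RInt_continuous_2d, HB. }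
  apply is_RInt_unique, (is_RInt_derive (fun v => RInt (fun t => B t v) a b)).
  - intros p _. apply DK.
  - intros p _. apply continuous_RInt_param; assumption.
Qed.

Lemma double_int_gt_0 (F : R -> R -> R) (a' c' : R) :
  a < a' <= b -> c < c' <= d -> continuous_2d F ->
  (forall t p, a <= t <= b -> 0 <= F t p) ->
  (forall t p, a < t < a' -> c < p < c' -> 0 < F t p) ->
  0 < double_int F.
Proof.
  intros Ha' Hc' HF Hnonneg Hpos. apply (RInt_gt_0_on_subinterval _ c c' d Hc').
  - intros p _. apply continuous_RInt_param; assumption.
  - intros p _. apply RInt_ge_0; [exact Hab | apply ex_RInt_continuous_2d, HF |].
    intros t Ht. apply Hnonneg. lra.
  - intros p Hp. apply (RInt_gt_0_on_subinterval _ a a' b Ha').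
    + intros t _. apply continuity_2d_pt_fst, HF.
    + intros t Ht. apply Hnonneg, Ht.
    + intros t Ht. apply Hpos; assumption.
Qed.

End DoubleIntegral.

Definition sphere_chart (f : R -> R -> R -> R) (t p : R) : R :=
  f (sin t * cos p) (sin t * sin p) (cos t) * sin t.

Lemma sphere_int_double_int (f : R -> R -> R -> R) :
  sphere_int f = double_int 0 PI 0 (2 * PI) (sphere_chart f).
Proof. reflexivity. Qed.

Lemma sphere_int_plus (f g : R -> R -> R -> R) :
  continuous_2d (sphere_chart f) -> continuous_2d (sphere_chart g) ->
  sphere_int (fun x y z => f x y z + g x y z) = sphere_int f + sphere_int g.
Proof.
  intros Hf Hg. pose proof PI_RGT_0.
  rewrite !sphere_int_double_int, <- double_int_plus by (assumption || lra).
  apply double_int_ext. intros t p. unfold sphere_chart. ring.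
Qed.

Lemma sphere_int_scal (k : R) (f : R -> R -> R -> R) : continuous_2d (sphere_chart f) ->
  sphere_int (fun x y z => k * f x y z) = k * sphere_int f.
Proof.
  intros Hf. pose proof PI_RGT_0.
  rewrite !sphere_int_double_int, <- double_int_scal by (assumption || lra).
  apply double_int_ext. intros t p. unfold sphere_chart. ring.
Qed.

Lemma sphere_int_gt_0 (f : R -> R -> R -> R) : continuous_2d (sphere_chart f) ->
  (forall x y z, 0 <= f x y z) -> (forall x y z, 0 < x -> 0 < y -> 0 < z -> 0 < f x y z) ->
  0 < sphere_int f.
Proof.
  intros Hf Hnonneg Hpos. pose proof PI_RGT_0.
  apply (double_int_gt_0 0 PI 0 (2 * PI) ltac:(lra) _ (PI / 2) (PI / 2)); [lra | lra | exact Hf | |].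
  - intros t p Ht. apply Rmult_le_pos; [apply Hnonneg | apply sin_ge_0; lra].
  - intros t p Ht Hp.
    assert (0 < sin t) by (apply sin_gt_0; lra). assert (0 < cos t) by (apply cos_gt_0; lra).
    assert (0 < sin p) by (apply sin_gt_0; lra). assert (0 < cos p) by (apply cos_gt_0; lra).
    apply Rmult_lt_0_compat; [apply Hpos; try apply Rmult_lt_0_compat |]; assumption.
Qed.

Lemma sphere_int_divergence (f : R -> R -> R -> R) (A At B : R -> R -> R) :
  continuous_2d (sphere_chart f) -> continuous_2d At -> continuous_2d B ->
  (forall t p, is_derive (fun u => A u p) t (At t p)) ->
  (forall t p, is_derive (fun v => B t v) p (sphere_chart f t p - At t p)) ->
  (forall p, A 0 p = 0) -> (forall p, A PI p = 0) -> (forall t, B t (2 * PI) = B t 0) ->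
  sphere_int f = 0.
Proof.
  intros Hf HAt HB DA DB A0 API Bper.
  assert (HPI : 0 <= PI) by (pose proof PI_RGT_0; lra).
  assert (HBp : continuous_2d (fun t p => sphere_chart f t p - At t p))
    by (intros t p; apply continuity_2d_pt_minus; [apply Hf | apply HAt]).
  rewrite sphere_int_double_int.
  rewrite (double_int_ext _ _ _ _ _ (fun t p => At t p + (sphere_chart f t p - At t p)))
    by (intros t p; ring).
  rewrite double_int_plus by assumption.
  rewrite (double_int_derive_fst _ _ _ _ A), (double_int_derive_snd _ _ _ _ HPI B) by assumption.
  rewrite (RInt_ext _ (fun _ => 0)) by (intros p _; rewrite A0, API; apply Rminus_diag).
  rewrite (RInt_ext (fun t => B t (2 * PI)) (fun t => B t 0)) by (intros t _; apply Bper).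
  rewrite RInt_const, Rminus_diag, Rplus_0_r. exact (scal_zero_r _).
Qed.

Lemma cos_sq (x : R) : cos x ^ 2 = 1 - sin x ^ 2.
Proof. rewrite <- (sin2_cos2 x). unfold Rsqr. ring. Qed.

Section BallMajumdarMoments.

Variables m1 m2 m3 : R.

Let rho_at (t p : R) : R := BM_rho m1 m2 m3 (sin t * cos p) (sin t * sin p) (cos t).

Ltac solve_continuous_2d :=
  solve [intros ? ?; unfold sphere_chart, rho_at, BM_rho; continuity_2d].

Ltac solve_is_derive :=
  let t := fresh "t" in let p := fresh "p" in let Hp := fresh "Hp" in
  intros t p; unfold sphere_chart, rho_at, BM_rho; auto_derive; [exact I |];
  match goal with |- ?u = ?v => change (@eq R u v) end;
  (* [auto_derive] writes [u ^ 2] as [u * (u * 1)], also under [exp]. *)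
  cbn [pow]; unfold Rdiv; pose proof (cos_sq p) as Hp; ring [Hp].

Lemma BM_moment_gap_xy :
  sphere_int (fun x y z => x ^ 2 * BM_rho m1 m2 m3 x y z)
  - sphere_int (fun x y z => y ^ 2 * BM_rho m1 m2 m3 x y z)
  = 2 * (m1 - m2) * sphere_int (fun x y z => x ^ 2 * y ^ 2 * BM_rho m1 m2 m3 x y z).
Proof.
  enough (Hf : sphere_int (fun x y z => x ^ 2 * BM_rho m1 m2 m3 x y z
    + (-1) * (y ^ 2 * BM_rho m1 m2 m3 x y z)
    + (- (2 * (m1 - m2))) * (x ^ 2 * y ^ 2 * BM_rho m1 m2 m3 x y z)) = 0).
  { rewrite !sphere_int_plus, !sphere_int_scal in Hf by solve_continuous_2d. lra. }
  (* Rotation about the z-axis is d/dp, so A = 0 and B = x y rho sin t. *)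
  apply (sphere_int_divergence _ (fun _ _ => 0) (fun _ _ => 0)
    (fun t p => sin t ^ 3 * cos p * sin p * rho_at t p)).
  all: try solve_continuous_2d.
  - intros t p. apply (is_derive_const (K := R_AbsRing) (V := R_NormedModule)).
  - solve_is_derive.
  - reflexivity.
  - reflexivity.
  - intros t. unfold rho_at. rewrite sin_2PI, cos_2PI, sin_0, cos_0. reflexivity.
Qed.

Lemma BM_moment_gap_xz :
  sphere_int (fun x y z => x ^ 2 * BM_rho m1 m2 m3 x y z)
  - sphere_int (fun x y z => z ^ 2 * BM_rho m1 m2 m3 x y z)
  = 2 * (m1 - m3) * sphere_int (fun x y z => x ^ 2 * z ^ 2 * BM_rho m1 m2 m3 x y z).
Proof.
  enough (Hf : sphere_int (fun x y z => x ^ 2 * BM_rho m1 m2 m3 x y z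
    + (-1) * (z ^ 2 * BM_rho m1 m2 m3 x y z)
    + (- (2 * (m1 - m3))) * (x ^ 2 * z ^ 2 * BM_rho m1 m2 m3 x y z)) = 0).
  { rewrite !sphere_int_plus, !sphere_int_scal in Hf by solve_continuous_2d. lra. }
  (* z d/dx - x d/dz = cos p d/dt - cot t sin p d/dp, applied to -x z rho:
     A = -sin t cos p (x z rho) and B = cos t sin p (x z rho). *)
  apply (sphere_int_divergence _
    (fun t p => - sin t ^ 2 * cos t * cos p ^ 2 * rho_at t p)
    (fun t p => - sin t * cos p ^ 2 * rho_at t p * (2 * cos t ^ 2 - sin t ^ 2
       + 2 * sin t ^ 2 * cos t ^ 2 * (m1 * cos p ^ 2 + m2 * sin p ^ 2 - m3)))
    (fun t p => sin t * cos t ^ 2 * sin p * cos p * rho_at t p)).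
  all: try solve_continuous_2d.
  - solve_is_derive.
  - solve_is_derive.
  - intros p. rewrite sin_0. ring.
  - intros p. rewrite sin_PI. ring.
  - intros t. unfold rho_at. rewrite sin_2PI, cos_2PI, sin_0, cos_0. reflexivity.
Qed.

Lemma BM_moment_gap_yz :
  sphere_int (fun x y z => y ^ 2 * BM_rho m1 m2 m3 x y z)
  - sphere_int (fun x y z => z ^ 2 * BM_rho m1 m2 m3 x y z)
  = 2 * (m2 - m3) * sphere_int (fun x y z => y ^ 2 * z ^ 2 * BM_rho m1 m2 m3 x y z).
Proof.
  enough (Hf : sphere_int (fun x y z => y ^ 2 * BM_rho m1 m2 m3 x y z
    + (-1) * (z ^ 2 * BM_rho m1 m2 m3 x y z)
    + (- (2 * (m2 - m3))) * (y ^ 2 * z ^ 2 * BM_rho m1 m2 m3 x y z)) = 0).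
  { rewrite !sphere_int_plus, !sphere_int_scal in Hf by solve_continuous_2d. lra. }
  (* y d/dz - z d/dy = - sin p d/dt - cot t cos p d/dp, applied to y z rho:
     A = -sin t sin p (y z rho) and B = -cos t cos p (y z rho). *)
  apply (sphere_int_divergence _
    (fun t p => - sin t ^ 2 * cos t * sin p ^ 2 * rho_at t p)
    (fun t p => - sin t * sin p ^ 2 * rho_at t p * (2 * cos t ^ 2 - sin t ^ 2
       + 2 * sin t ^ 2 * cos t ^ 2 * (m1 * cos p ^ 2 + m2 * sin p ^ 2 - m3)))
    (fun t p => - sin t * cos t ^ 2 * sin p * cos p * rho_at t p)).
  all: try solve_continuous_2d.
  - solve_is_derive.
  - solve_is_derive.
  - intros p. rewrite sin_0. ring.
  - intros p. rewrite sin_PI. ring.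
  - intros t. unfold rho_at. rewrite sin_2PI, cos_2PI, sin_0, cos_0. reflexivity.
Qed.

Lemma BM_Z_pos : 0 < BM_Z m1 m2 m3.
Proof.
  apply sphere_int_gt_0; [solve_continuous_2d | |]; intros; [left |]; apply exp_pos.
Qed.

Lemma BM_rho_pos x y z : 0 < BM_rho m1 m2 m3 x y z.
Proof. apply Rdiv_lt_0_compat; [apply exp_pos | apply BM_Z_pos]. Qed.

Lemma BM_product_moments_pos :
  0 < sphere_int (fun x y z => x ^ 2 * y ^ 2 * BM_rho m1 m2 m3 x y z) /\
  0 < sphere_int (fun x y z => x ^ 2 * z ^ 2 * BM_rho m1 m2 m3 x y z) /\
  0 < sphere_int (fun x y z => y ^ 2 * z ^ 2 * BM_rho m1 m2 m3 x y z).
Proof.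
  repeat split; apply sphere_int_gt_0; try solve_continuous_2d; intros x y z.
  all: try (apply Rmult_le_pos; [apply Rmult_le_pos; apply pow2_ge_0 | left; apply BM_rho_pos]).
  all: intros Hx Hy Hz; apply Rmult_lt_0_compat;
    [apply Rmult_lt_0_compat; apply pow_lt; assumption | apply BM_rho_pos].
Qed.

End BallMajumdarMoments.

Theorem lemma2p1 (l1 l2 l3 m1 m2 m3 : R) :
  -(1/3) < l1 -> l1 <= l2 -> l2 <= l3 -> l3 < 2/3 ->
  l1 + l2 + l3 = 0 ->
  BM_multipliers l1 l2 l3 m1 m2 m3 ->
  (m1 <= m2 /\ m2 <= m3) /\
  (l1 = l2 -> m1 = m2) /\ (l1 = l3 -> m1 = m3) /\ (l2 = l3 -> m2 = m3).
Proof.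
  intros _ H12 H23 _ _ (_ & Hx & Hy & Hz).
  pose proof (BM_moment_gap_xy m1 m2 m3) as Gxy.
  pose proof (BM_moment_gap_xz m1 m2 m3) as Gxz.
  pose proof (BM_moment_gap_yz m1 m2 m3) as Gyz.
  rewrite Hx, Hy in Gxy. rewrite Hx, Hz in Gxz. rewrite Hy, Hz in Gyz.
  destruct (BM_product_moments_pos m1 m2 m3) as (Pxy & Pxz & Pyz).
  repeat split; intros; nra.
Qed.
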